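(* Let $f:[0,1]\to[0,1]$ be a continuous map with a unique fixed point $a$, and let $P$ be a (non-fixed) periodic orbit of $f$ with over-rotation pair $(p,q)$ and code $L$. If there exist $u,v\in P$, $u\ne v$, with $u>_a v$ and $L(u)=L(v)$, then $p$ and $q$ are not coprime.
   Context: For a continuous interval map $f$ and a periodic orbit $P$ of period $q$ which is not a fixed point, let $2p$ be the number of points $x\in P$ such that $f(x)-x$ and $f^2(x)-f(x)$ have different signs; the over-rotation pair of $P$ is $(p,q)$ and its over-rotation number is $\rho(P)=p/q$. Write $x>_a y$ if $x<y<a$ or $x>y>a$. Code: let $\rho=\rho(P)$ and $\varphi:P\to\{0,1\}$, $\varphi(y)=1$ if $y>a$ and $f(y)<a$, $\varphi(y)=0$ otherwise. The code of $P$ is $L:P\to\mathbb{R}$ with $L(x_0)=0$ for the leftmost point $x_0$ of $P$ and $L(f(y))=L(y)+\rho-\varphi(y)$ for $y\in P$. *)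

From Stdlib Require Import Reals Lra Lia Arith List.
Open Scope R_scope.

Definition cont_on_unit (f : R -> R) : Prop :=
  forall x, 0 <= x <= 1 -> forall eps, eps > 0 ->
    exists delta, delta > 0 /\
      forall y, 0 <= y <= 1 -> Rabs (y - x) < delta -> Rabs (f y - f x) < eps.

Definition maps_unit (f : R -> R) : Prop :=
  forall x, 0 <= x <= 1 -> 0 <= f x <= 1.

Definition unique_fixed_point (f : R -> R) (a : R) : Prop :=
  0 <= a <= 1 /\ f a = a /\ forall x, 0 <= x <= 1 -> f x = x -> x = a.

Definition orbit_list (f : R -> R) (x : R) (q : nat) : list R :=
  map (fun i => Nat.iter i f x) (seq 0 q).

Definition periodic_orbit (f : R -> R) (x : R) (q : nat) (P : R -> Prop) : Prop :=
  (0 < q)%nat /\ Nat.iter q f x = x /\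
  (forall i, (0 < i < q)%nat -> Nat.iter i f x <> x) /\
  (forall y, P y <-> In y (orbit_list f x q)).

Definition sign_change (f : R -> R) (x : R) : bool :=
  if Rlt_dec ((f x - x) * (f (f x) - f x)) 0 then true else false.

Definition over_rotation_pair (f : R -> R) (x : R) (p q : nat) : Prop :=
  (2 * p)%nat = length (filter (sign_change f) (orbit_list f x q)).

Definition gt_a (a x y : R) : Prop := (x < y < a) \/ (a < y < x).

Definition phi (f : R -> R) (a y : R) : R :=
  if Rlt_dec a y then (if Rlt_dec (f y) a then 1 else 0) else 0.

Definition is_code (f : R -> R) (a : R) (P : R -> Prop) (p q : nat) (L : R -> R) : Prop :=
  exists x0, P x0 /\ (forall y, P y -> x0 <= y) /\ L x0 = 0 /\
  forall y, P y -> L (f y) = L y + INR p / INR q - phi f a y.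

(* Along the orbit, each application of f adds p/q to the code and subtracts
   phi, which is 0 or 1; hence L(f^k x) = L(x) + k p/q modulo an integer.  If p
   and q were coprime, the numbers k p/q (0 <= k < q) would be pairwise distinct
   modulo 1, so L would be injective on P and could not take the same value at
   two distinct points u, v. *)
From Stdlib Require Import Reals Arith Lra Lia List.
Open Scope R_scope.

Lemma phi_is_nat f a y : exists n, phi f a y = INR n.
Proof.
  unfold phi; destruct (Rlt_dec a y); [destruct (Rlt_dec (f y) a)|].
  - now exists 1%nat.
  - now exists 0%nat.
  - now exists 0%nat.
Qed.

Lemma iter_in_orbit_list f x q k :
  (k < q)%nat -> In (Nat.iter k f x) (orbit_list f x q).
Proof.
  intros Hk; apply (in_map (fun i => Nat.iter i f x)), in_seq; lia.
Qed.

Lemma in_orbit_list f x q y :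
  In y (orbit_list f x q) -> exists k, (k < q)%nat /\ y = Nat.iter k f x.
Proof.
  intros Hy; apply in_map_iff in Hy as [k [<- Hk]].
  apply in_seq in Hk; exists k; split; [lia | reflexivity].
Qed.

Lemma code_iter f a x P p q L :
  (forall y, P y <-> In y (orbit_list f x q)) ->
  (forall y, P y -> L (f y) = L y + INR p / INR q - phi f a y) ->
  forall k, (k < q)%nat ->
    exists m, L (Nat.iter k f x) = L x + INR k * (INR p / INR q) - INR m.
Proof.
  intros HP HL; induction k as [|k IH]; intros Hk.
  - exists 0%nat; simpl; ring.
  - destruct IH as [m Hm]; [lia|].
    destruct (phi_is_nat f a (Nat.iter k f x)) as [n Hn].
    exists (m + n)%nat; simpl Nat.iter.
    rewrite HL by (apply HP, iter_in_orbit_list; lia).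
    rewrite Hm, Hn, plus_INR, S_INR; ring.
Qed.

Lemma coprime_mul_eqmod_inj p q i j m n :
  Nat.gcd p q = 1%nat -> (i < q)%nat -> (j < q)%nat ->
  (i * p + m * q = j * p + n * q)%nat -> i = j.
Proof.
  intros Hg.
  enough (H : forall i j m n, (j <= i < q)%nat ->
            (i * p + m * q = j * p + n * q)%nat -> i = j).
  { intros Hi Hj E; destruct (Nat.le_ge_cases j i).
    - apply (H i j m n); lia.
    - symmetry; apply (H j i n m); lia. }
  clear i j m n; intros i j m n Hr E.
  assert (Hd : Nat.divide q (p * (i - j))).
  { exists (n - m)%nat; rewrite Nat.mul_sub_distr_r, Nat.mul_sub_distr_l; nia. }
  apply Nat.gauss in Hd; [| now rewrite Nat.gcd_comm].
  destruct (Nat.eq_dec i j) as [|Hne]; [assumption|].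
  apply Nat.divide_pos_le in Hd; lia.
Qed.

Lemma shifted_multiples_inj (p q i j m n : nat) (c : R) :
  Nat.gcd p q = 1%nat -> (i < q)%nat -> (j < q)%nat ->
  c + INR i * (INR p / INR q) - INR m = c + INR j * (INR p / INR q) - INR n ->
  i = j.
Proof.
  intros Hg Hi Hj E.
  assert (Hq : INR q <> 0) by (apply not_0_INR; lia).
  apply (coprime_mul_eqmod_inj p q i j n m Hg Hi Hj), INR_eq.
  rewrite !plus_INR, !mult_INR.
  replace (INR i * INR p) with (INR i * (INR p / INR q) * INR q) by (field; exact Hq).
  replace (INR j * INR p) with (INR j * (INR p / INR q) * INR q) by (field; exact Hq).
  replace (INR i * (INR p / INR q)) with (INR j * (INR p / INR q) + INR m - INR n) by lra.
  ring.
Qed.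

Theorem lemma2p2 (f : R -> R) (a : R) (x : R) (P : R -> Prop) (p q : nat) (L : R -> R) :
  cont_on_unit f -> maps_unit f -> unique_fixed_point f a ->
  0 <= x <= 1 ->
  periodic_orbit f x q P -> (2 <= q)%nat ->
  over_rotation_pair f x p q ->
  is_code f a P p q L ->
  (exists u v, P u /\ P v /\ u <> v /\ gt_a a u v /\ L u = L v) ->
  Nat.gcd p q <> 1%nat.
Proof.
  intros _ _ _ _ [_ [_ [_ HP]]] _ _ [_ [_ [_ [_ HL]]]]
         [u [v [Pu [Pv [Huv [_ HLuv]]]]]] Hg.
  apply HP, in_orbit_list in Pu as [i [Hi ->]].
  apply HP, in_orbit_list in Pv as [j [Hj ->]].
  destruct (code_iter f a x P p q L HP HL i Hi) as [m Hm].
  destruct (code_iter f a x P p q L HP HL j Hj) as [n Hn].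
  rewrite Hm, Hn in HLuv.
  apply Huv; f_equal; exact (shifted_multiples_inj p q i j m n (L x) Hg Hi Hj HLuv).
Qed.
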